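(* Let $\mathbf{v}_1,\dots,\mathbf{v}_n\in\mathbb{R}^d$, not all zero, let $V=[\mathbf{v}_1,\dots,\mathbf{v}_n]\in\mathbb{R}^{d\times n}$ and $A=V^TV$. Let $0<\epsilon\le1$ and let $\underline{N}^{\epsilon}$ be the least dimension of a linear subspace $S\subseteq\mathbb{R}^d$ such that $\frac{\sum_{i=1}^n\|\mathbf{v}_i-P_S\mathbf{v}_i\|_2^2}{\sum_{i=1}^n\|\mathbf{v}_i\|_2^2}\le\epsilon^2$, where $P_S$ is the orthogonal projection onto $S$. Then $$\underline{N}^{\epsilon}\ge\frac{\left(\sum_{i=1}^n\|\mathbf{v}_i\|_2^2\right)^2(1-\epsilon^2)^2}{\sum_{i,j=1}^n(\mathbf{v}_i\cdot\mathbf{v}_j)^2}=\frac{\operatorname{tr}(A)^2(1-\epsilon^2)^2}{\|A\|_F^2}.$$ *)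

From HB Require Import structures.
From mathcomp Require Import all_boot all_order all_algebra.
From mathcomp Require Import reals.
Set Implicit Arguments. Unset Strict Implicit. Unset Printing Implicit Defensive.
Import Order.TTheory GRing.Theory Num.Theory.
Local Open Scope ring_scope.

Definition dotv (R : realType) (d : nat) (u w : 'rV[R]_d) : R := (u *m w^T) 0 0.
Definition norm2 (R : realType) (d : nat) (u : 'rV[R]_d) : R := dotv u u.

Definition vcol (R : realType) (d n : nat) (V : 'M[R]_(d, n)) (i : 'I_n) : 'rV[R]_d :=
  (col i V)^T.

(* P is the orthogonal projection onto the linear subspace S of R^d
   (S given as the row space of a d x d matrix, dim S = \rank S):
   P x lies in S and x - P x is orthogonal to every element of S. *)
Definition is_orth_proj (R : realType) (d : nat) (S : 'M[R]_d)
    (P : 'rV[R]_d -> 'rV[R]_d) : Prop :=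
  forall x : 'rV[R]_d, (P x <= S)%MS /\
    (forall s : 'rV[R]_d, (s <= S)%MS -> dotv (x - P x) s = 0).

Definition rel_err (R : realType) (d n : nat) (V : 'M[R]_(d, n))
    (P : 'rV[R]_d -> 'rV[R]_d) : R :=
  (\sum_(i < n) norm2 (vcol V i - P (vcol V i))) / (\sum_(i < n) norm2 (vcol V i)).

(* Let Pi be the orthogonal projection onto S: a symmetric idempotent matrix
   with trace dim S.  Writing M = V V^T, Pythagoras shows that the captured
   energy sum_i |Pi v_i|^2 = tr (Pi M) is at least (1 - eps^2) tr M as soon as
   the relative error is at most eps^2, and Cauchy-Schwarz for the Frobenius
   inner product bounds tr (Pi M)^2 by |Pi|_F^2 |M|_F^2 = dim S |V^T V|_F^2. *)

From mathcomp Require Import all_boot all_order all_algebra.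
From mathcomp Require Import reals ring lra.
Import Order.TTheory GRing.Theory Num.Theory.
Local Open Scope ring_scope.

Section FrobeniusProduct.
Context {R : comPzRingType}.

Lemma mxtrace_mul_trmxE {m n} (X Y : 'M[R]_(m, n)) :
  \tr (X *m Y^T) = \sum_(p : 'I_m * 'I_n) X p.1 p.2 * Y p.1 p.2.
Proof.
rewrite /mxtrace -(pair_bigA _ (fun i j => X i j * Y i j)).
by apply: eq_bigr => i _; rewrite mxE; apply: eq_bigr => j _; rewrite mxE.
Qed.

Lemma sum_sqr_gram {m n} (X : 'M[R]_(m, n)) :
  \sum_i \sum_j (X *m X^T) i j ^+ 2 = \tr ((X^T *m X) *m (X^T *m X)).
Proof.
rewrite (pair_bigA _ (fun i j => (X *m X^T) i j ^+ 2)) /=.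
under eq_bigr do rewrite expr2.
by rewrite -mxtrace_mul_trmxE trmx_mul trmxK -!mulmxA mxtrace_mulC !mulmxA.
Qed.

End FrobeniusProduct.

Section FrobeniusCauchySchwarz.
Context {R : realDomainType}.

Lemma sum_CauchySchwarz (I : finType) (x y : I -> R) :
  (\sum_i x i * y i) ^+ 2 <= (\sum_i x i ^+ 2) * (\sum_i y i ^+ 2).
Proof.
set a := \sum_i x i ^+ 2; set b := \sum_i y i ^+ 2; set c := \sum_i x i * y i.
have a_ge0 : 0 <= a by rewrite sumr_ge0 // => i _; rewrite sqr_ge0.
have [b0 | b_neq0] := eqVneq b 0.
  have y0 i : y i = 0.
    by apply/eqP; rewrite -sqrf_eq0; apply/eqP/(psumr_eq0P (fun j _ => sqr_ge0 (y j)) b0).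
  by rewrite b0 mulr0 /c big1 ?expr0n // => i _; rewrite y0 mulr0.
have b_gt0 : 0 < b by rewrite lt_def b_neq0 sumr_ge0 // => i _; rewrite sqr_ge0.
(* Expanding [0 <= \sum_i (b x_i - c y_i)^2] gives [0 <= b (a b - c^2)]. *)
have expand : \sum_i (b * x i - c * y i) ^+ 2 = b * (a * b - c ^+ 2).
  rewrite (eq_bigr (fun i => b ^+ 2 * x i ^+ 2 - b * c *+ 2 * (x i * y i)
                            + c ^+ 2 * y i ^+ 2)) => [|i _]; last by ring.
  rewrite big_split sumrB /= -!mulr_sumr -/a -/b -/c.
  clearbody a b c; ring.
have : 0 <= \sum_i (b * x i - c * y i) ^+ 2 by rewrite sumr_ge0 // => i _; rewrite sqr_ge0.
by rewrite expand pmulr_rge0 // subr_ge0.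
Qed.

Lemma mxtrace_mul_trmx_ge0 {m n} (X : 'M[R]_(m, n)) : 0 <= \tr (X *m X^T).
Proof. by rewrite mxtrace_mul_trmxE sumr_ge0 // => p _; rewrite -expr2 sqr_ge0. Qed.

Lemma mxtrace_mul_trmx_eq0 {m n} (X : 'M[R]_(m, n)) :
  (\tr (X *m X^T) == 0) = (X == 0).
Proof.
apply/eqP/eqP => [|->]; last by rewrite mul0mx mxtrace0.
rewrite mxtrace_mul_trmxE => /psumr_eq0P X0; apply/matrixP => i j.
have /eqP := X0 (fun p _ => sqr_ge0 _) (i, j) isT.
by rewrite -expr2 sqrf_eq0 mxE => /eqP.
Qed.

Lemma mxtrace_CauchySchwarz {m n} (X Y : 'M[R]_(m, n)) :
  \tr (X *m Y^T) ^+ 2 <= \tr (X *m X^T) * \tr (Y *m Y^T).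
Proof.
rewrite !mxtrace_mul_trmxE.
under [in X in _ <= X * _]eq_bigr do rewrite -expr2.
under [in X in _ <= _ * X]eq_bigr do rewrite -expr2.
exact: sum_CauchySchwarz.
Qed.

Lemma mxtrace_proj_mul_sqr_le {n} (Pi M : 'M[R]_n) :
  Pi^T = Pi -> Pi *m Pi = Pi -> M^T = M ->
  \tr (Pi *m M) ^+ 2 <= \tr Pi * \tr (M *m M).
Proof. by move=> PiT PiPi MT; have := mxtrace_CauchySchwarz Pi M; rewrite MT PiT PiPi. Qed.

End FrobeniusCauchySchwarz.

Lemma sqr_div_le {R : realFieldType} (x y r F : R) :
  0 <= x -> x <= y -> 0 <= r -> 0 <= F -> y ^+ 2 <= r * F -> x ^+ 2 / F <= r.
Proof.
move=> x_ge0 x_le_y r_ge0 F_ge0 yF.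
have [-> | F_neq0] := eqVneq F 0; first by rewrite invr0 mulr0.
rewrite ler_pdivrMr ?lt_def ?F_neq0 //; nra.
Qed.

Section OrthogonalProjectionMatrix.
Context {R : realFieldType}.

Lemma row_free_gram_unit {r d} (B : 'M[R]_(r, d)) :
  row_free B -> B *m B^T \in unitmx.
Proof.
move=> freeB; rewrite -row_free_unit; apply/inj_row_free => v vBBt0.
apply: (row_free_inj freeB); rewrite mul0mx; apply/eqP.
by rewrite -mxtrace_mul_trmx_eq0 trmx_mul !mulmxA -(mulmxA v) vBBt0 !mul0mx mxtrace0.
Qed.

Definition orth_proj_mx {r d} (B : 'M[R]_(r, d)) : 'M[R]_d :=
  B^T *m invmx (B *m B^T) *m B.

Context {r d : nat} {B : 'M[R]_(r, d)}.
Hypothesis freeB : row_free B.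
Local Notation Pi := (orth_proj_mx B).

Lemma orth_proj_mxK : Pi *m B^T = B^T.
Proof. by rewrite -!mulmxA mulVmx ?mulmx1 // row_free_gram_unit. Qed.

Lemma orth_proj_mx_sym : Pi^T = Pi.
Proof. by rewrite !trmx_mul trmxK trmx_inv trmx_mul trmxK mulmxA. Qed.

Lemma orth_proj_mx_idem : Pi *m Pi = Pi.
Proof. by rewrite {2}/orth_proj_mx !mulmxA orth_proj_mxK. Qed.

Lemma mxtrace_orth_proj_mx : \tr Pi = r%:R.
Proof. by rewrite mxtrace_mulC mulmxA mulmxV ?mxtrace1 // row_free_gram_unit. Qed.

Lemma orth_proj_mx_sub {m} (X : 'M[R]_(m, d)) : (X *m Pi <= B)%MS.
Proof. by rewrite /orth_proj_mx !mulmxA submxMl. Qed.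

Lemma orth_proj_mx_orth {m n} (X : 'M[R]_(m, d)) (Y : 'M[R]_(n, d)) :
  (Y <= B)%MS -> (X - X *m Pi) *m Y^T = 0.
Proof.
by case/submxP=> D ->; rewrite trmx_mul mulmxA mulmxBl -mulmxA orth_proj_mxK subrr mul0mx.
Qed.

End OrthogonalProjectionMatrix.

Section ProjectionEnergy.
Context {R : realType}.

Lemma dotv_mxtrace {d} (u w : 'rV[R]_d) : dotv u w = \tr (u *m w^T).
Proof. by rewrite /mxtrace big_ord1. Qed.

Lemma dotvC {d} (u w : 'rV[R]_d) : dotv u w = dotv w u.
Proof. by rewrite !dotv_mxtrace -mxtrace_tr trmx_mul trmxK. Qed.

Lemma dotvBl {d} (u u' w : 'rV[R]_d) : dotv (u - u') w = dotv u w - dotv u' w.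
Proof. by rewrite !dotv_mxtrace mulmxBl linearB. Qed.

Lemma norm2_ge0 {d} (u : 'rV[R]_d) : 0 <= norm2 u.
Proof. by rewrite /norm2 dotv_mxtrace mxtrace_mul_trmx_ge0. Qed.

Lemma norm2_eq0 {d} (u : 'rV[R]_d) : (norm2 u == 0) = (u == 0).
Proof. by rewrite /norm2 dotv_mxtrace mxtrace_mul_trmx_eq0. Qed.

Lemma norm2D_orth {d} (u w : 'rV[R]_d) :
  dotv u w = 0 -> norm2 (u + w) = norm2 u + norm2 w.
Proof.
move=> uw0; rewrite /norm2 !dotv_mxtrace linearD mulmxDl !mulmxDr !mxtraceD.
by rewrite -!dotv_mxtrace (dotvC w) uw0 addr0 add0r.
Qed.

Lemma orth_proj_Pythagoras {d} (S : 'M[R]_d) P x :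
  is_orth_proj S P -> norm2 x = norm2 (P x) + norm2 (x - P x).
Proof.
case/(_ x)=> PxS orthP.
by rewrite -norm2D_orth ?(addrC (P x)) ?subrK // dotvC orthP.
Qed.

Lemma orth_proj_unique {d} {S : 'M[R]_d} {P Q : 'rV[R]_d -> 'rV[R]_d} :
  is_orth_proj S P -> is_orth_proj S Q -> P =1 Q.
Proof.
move=> hP hQ x; have [PxS orthP] := hP x; have [QxS orthQ] := hQ x.
have PQxS : (P x - Q x <= S)%MS.
  by move: PxS QxS => /submxP[A ->] /submxP[B ->]; rewrite -mulmxBl submxMl.
apply/eqP; rewrite -subr_eq0 -norm2_eq0; apply/eqP.
have -> : norm2 (P x - Q x) = dotv ((x - Q x) - (x - P x)) (P x - Q x).
  by rewrite opprB [x - _ + _]addrC addrA subrK.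
by rewrite dotvBl orthP // orthQ // subrr.
Qed.

Lemma orth_proj_mxP {d} (S : 'M[R]_d) :
  is_orth_proj S (mulmxr (orth_proj_mx (row_base S))).
Proof.
move=> x; split=> [|s sS] /=; first by rewrite -(eq_row_base S) orth_proj_mx_sub.
by rewrite dotv_mxtrace orth_proj_mx_orth ?mxtrace0 ?row_base_free ?eq_row_base.
Qed.

Lemma sum_norm2_row {m d} (X : 'M[R]_(m, d)) :
  \sum_i norm2 (row i X) = \tr (X *m X^T).
Proof.
apply: eq_bigr => i _; rewrite /norm2 /dotv !mxE.
by apply: eq_bigr => j _; rewrite !mxE.
Qed.

Lemma dotv_row {m d} (X : 'M[R]_(m, d)) i j :
  dotv (row i X) (row j X) = (X *m X^T) i j.
Proof. by rewrite /dotv !mxE; apply: eq_bigr => k _; rewrite !mxE. Qed.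

Lemma sum_norm2_proj {m d} (X : 'M[R]_(m, d)) (Pi : 'M[R]_d) :
  Pi^T = Pi -> Pi *m Pi = Pi ->
  \sum_i norm2 (row i X *m Pi) = \tr (Pi *m (X^T *m X)).
Proof.
move=> PiT PiPi; under eq_bigr do rewrite -row_mul.
rewrite sum_norm2_row [RHS]mxtrace_mulC trmx_mul PiT !mulmxA -(mulmxA X) PiPi.
by rewrite [LHS]mxtrace_mulC mulmxA.
Qed.

Context {d n : nat} {V : 'M[R]_(d, n)}.

Lemma vcolE i : vcol V i = row i V^T.
Proof. exact: tr_col. Qed.

Lemma dotv_vcol i j : dotv (vcol V i) (vcol V j) = (V^T *m V) i j.
Proof. by rewrite !vcolE dotv_row trmxK. Qed.

Lemma sum_norm2_vcol : \sum_i norm2 (vcol V i) = \tr (V^T *m V).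
Proof. by under eq_bigr do rewrite vcolE; rewrite sum_norm2_row trmxK. Qed.

Lemma sum_sqr_dotv_vcol :
  \sum_i \sum_j dotv (vcol V i) (vcol V j) ^+ 2 = \tr ((V *m V^T) *m (V *m V^T)).
Proof.
by under eq_bigr do under eq_bigr do rewrite !vcolE dotv_row; rewrite sum_sqr_gram trmxK.
Qed.

Lemma proj_energy_ge {S : 'M[R]_d} {P} {eps : R} :
  V != 0 -> is_orth_proj S P -> rel_err V P <= eps ^+ 2 ->
  (1 - eps ^+ 2) * \sum_i norm2 (vcol V i) <= \sum_i norm2 (P (vcol V i)).
Proof.
move=> V0 hP; rewrite /rel_err; set T := \sum_i norm2 (vcol V i).
have T_gt0 : 0 < T.
  rewrite /T sum_norm2_vcol -{2}(trmxK V) lt_def mxtrace_mul_trmx_eq0 trmx_eq0.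
  by rewrite V0 mxtrace_mul_trmx_ge0.
have T_split :
    T = \sum_i norm2 (P (vcol V i)) + \sum_i norm2 (vcol V i - P (vcol V i)).
  by rewrite -big_split; apply: eq_bigr => i _; exact: orth_proj_Pythagoras.
rewrite ler_pdivrMr // => err_le.
rewrite mulrBl mul1r; lra.
Qed.

Lemma proj_energy_sqr_le {S : 'M[R]_d} {P} :
  is_orth_proj S P ->
  (\sum_i norm2 (P (vcol V i))) ^+ 2
    <= (\rank S)%:R * \sum_i \sum_j dotv (vcol V i) (vcol V j) ^+ 2.
Proof.
move=> hP; have freeB := row_base_free S.
have PiPi := orth_proj_mx_idem freeB.
under eq_bigr do rewrite (orth_proj_unique hP (orth_proj_mxP S)) vcolE /=.
rewrite sum_sqr_dotv_vcol -(mxtrace_orth_proj_mx freeB).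
rewrite sum_norm2_proj ?orth_proj_mx_sym // trmxK.
by apply: mxtrace_proj_mul_sqr_le; rewrite ?orth_proj_mx_sym // trmx_mul trmxK.
Qed.

End ProjectionEnergy.

Theorem mainTheorem5 (R : realType) (d n : nat) (V : 'M[R]_(d, n)) (eps : R) :
  V != 0 -> 0 < eps -> eps <= 1 ->
  (forall (S : 'M[R]_d) (P : 'rV[R]_d -> 'rV[R]_d),
      is_orth_proj S P -> rel_err V P <= eps ^+ 2 ->
      (\sum_(i < n) norm2 (vcol V i)) ^+ 2 * (1 - eps ^+ 2) ^+ 2
        / (\sum_(i < n) \sum_(j < n) dotv (vcol V i) (vcol V j) ^+ 2)
      <= (\rank S)%:R)
  /\
  (\sum_(i < n) norm2 (vcol V i)) ^+ 2 * (1 - eps ^+ 2) ^+ 2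
    / (\sum_(i < n) \sum_(j < n) dotv (vcol V i) (vcol V j) ^+ 2)
  = (\tr (V^T *m V)) ^+ 2 * (1 - eps ^+ 2) ^+ 2
    / (\sum_(i < n) \sum_(j < n) ((V^T *m V) i j) ^+ 2).
Proof.
move=> V0 eps_gt0 eps_le1; split=> [S P hP err_le|]; last first.
  by rewrite sum_norm2_vcol; under eq_bigr do under eq_bigr do rewrite dotv_vcol.
rewrite -exprMn (mulrC (\sum_i _)).
apply: sqr_div_le (proj_energy_sqr_le hP).
- rewrite mulr_ge0 ?subr_ge0 ?expr_le1 ?(ltW eps_gt0) //.
  by rewrite sumr_ge0 // => i _; exact: norm2_ge0.
- exact: proj_energy_ge V0 hP err_le.
- exact: ler0n.
- by rewrite !sumr_ge0 // => i _; rewrite sumr_ge0 // => j _; exact: sqr_ge0.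
Qed.
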